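(* For every integer $n\ge0$ and all real $x,y$, $$\sum_{m=0}^{\lfloor n/2\rfloor}\binom{n}{2m}E_{n-2m}(x)(-1)^m y^{2m}=\sum_{k=0}^{n}\sum_{l=0}^{k}\sum_{m=0}^{\lfloor l/2\rfloor}S_2(n,k)\,\lambda^{n+l-k-2m}\binom{k}{l}E_{k-l,\lambda}(x)(-1)^m y^{2m}S_1(l,2m).$$
   Context: Let $\lambda$ be a nonzero real number; generating functions are formal power series in $t$. $e_\lambda^{x}(t)=(1+\lambda t)^{x/\lambda}$. The type 2 degenerate Euler polynomials are defined by $\frac{2}{e_\lambda^{1/2}(t)+e_\lambda^{-1/2}(t)}e_\lambda^{x}(t)=\sum_{n\ge0}E_{n,\lambda}(x)\frac{t^n}{n!}$. The (non-degenerate) type 2 Euler polynomials are defined by $\frac{2}{e^{t/2}+e^{-t/2}}e^{xt}=\sum_{n\ge0}E_n(x)\frac{t^n}{n!}$. $S_1(n,k)$ are the signed Stirling numbers of the first kind, $\frac{1}{k!}(\log(1+t))^k=\sum_{n\ge k}S_1(n,k)\frac{t^n}{n!}$, and $S_2(n,k)$ are the Stirling numbers of the second kind, $\frac{1}{k!}(e^t-1)^k=\sum_{n\ge k}S_2(n,k)\frac{t^n}{n!}$. *)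

From HB Require Import structures.
From mathcomp Require Import all_boot all_order all_algebra.
Set Implicit Arguments. Unset Strict Implicit. Unset Printing Implicit Defensive.
Import Order.TTheory GRing.Theory Num.Theory.
Local Open Scope ring_scope.

Section FPS.
Variable R : fieldType.

Definition fps := nat -> R.

Definition fps_one : fps := fun n => if n == 0%N then 1 else 0.
Definition fps_const (c : R) : fps := fun n => if n == 0%N then c else 0.
Definition fps_add (f g : fps) : fps := fun n => f n + g n.
Definition fps_sub (f g : fps) : fps := fun n => f n - g n.
Definition fps_scale (c : R) (f : fps) : fps := fun n => c * f n.
Definition fps_mul (f g : fps) : fps :=
  fun n => \sum_(i < n.+1) f i * g (n - i)%N.

Fixpoint fps_pow (f : fps) (k : nat) : fps :=
  match k with 0 => fps_one | k'.+1 => fps_mul f (fps_pow f k') end.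

(* first n+1 coefficients of the multiplicative inverse (needs f 0 != 0) *)
Fixpoint fps_inv_seq (f : fps) (n : nat) : seq R :=
  match n with
  | 0 => [:: (f 0%N)^-1]
  | n'.+1 => let s := fps_inv_seq f n' in
      rcons s (- (f 0%N)^-1 * \sum_(i < n'.+1) f i.+1 * nth 0 s (n' - i)%N)
  end.
Definition fps_inv (f : fps) : fps := fun n => nth 0 (fps_inv_seq f n) n.

Definition fps_exp (a : R) : fps := fun n => a ^+ n / (n`!)%:R.

(* e_lambda^x(t) = (1 + lambda t)^{x/lambda} = sum_n binom(x/lambda, n) (lambda t)^n *)
Definition fps_degexp (lam x : R) : fps :=
  fun n => (\prod_(i < n) (x / lam - i%:R)) / (n`!)%:R * lam ^+ n.

Definition fps_log1p : fps :=
  fun n => if n == 0%N then 0 else (-1) ^+ n.-1 / n%:R.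

End FPS.

(* signed Stirling numbers of the first kind: (log(1+t))^k/k! = sum S1(n,k) t^n/n! *)
Definition S1 {R : fieldType} (n k : nat) : R :=
  (n`!)%:R * (fps_pow (@fps_log1p R) k n / (k`!)%:R).

(* Stirling numbers of the second kind: (e^t-1)^k/k! = sum S2(n,k) t^n/n! *)
Definition S2 {R : fieldType} (n k : nat) : R :=
  (n`!)%:R * (fps_pow (fps_sub (fps_exp 1) (@fps_one R)) k n / (k`!)%:R).

(* type 2 Euler polynomials: 2/(e^{t/2}+e^{-t/2}) e^{xt} = sum E_n(x) t^n/n! *)
Definition Euler2 {R : fieldType} (n : nat) (x : R) : R :=
  (n`!)%:R *
  fps_mul (fps_scale 2 (fps_inv (fps_add (fps_exp (2^-1)) (fps_exp (- 2^-1)))))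
          (fps_exp x) n.

(* type 2 degenerate Euler polynomials:
   2/(e_lam^{1/2}(t)+e_lam^{-1/2}(t)) e_lam^x(t) = sum E_{n,lam}(x) t^n/n! *)
Definition DegEuler2 {R : fieldType} (lam : R) (n : nat) (x : R) : R :=
  (n`!)%:R *
  fps_mul (fps_scale 2 (fps_inv (fps_add (fps_degexp lam (2^-1))
                                         (fps_degexp lam (- 2^-1)))))
          (fps_degexp lam x) n.

From HB Require Import structures.
From mathcomp Require Import all_boot all_order all_algebra.
From mathcomp Require Import zify ring.
Import Order.TTheory GRing.Theory Num.Theory.
Local Open Scope ring_scope.
Set Implicit Arguments. Unset Strict Implicit. Unset Printing Implicit Defensive.

(* All power series are handled through their truncations modulo t^(n+1),
   as polynomials, so that composition of series is polynomial composition.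
   Put u(t) = (e^(lam t) - 1)/lam and L(t) = log(1 + lam t)/lam.  Comparing
   derivatives shows e_lam^a(u(t)) = e^(a t) for every a and L(u(t)) = t.
   Hence, with G and G_lam the generating functions of E_n(x) and E_(n,lam)(x),
       G_lam(x, u(t)) cos(y L(u(t))) = G(x, t) cos(y t).
   The coefficient of t^n on the right is the left-hand side of the theorem
   divided by n!.  On the left, expanding cos(y L(t)) = sum_m (-1)^m y^(2m)
   L(t)^(2m)/(2m)! and substituting u(t), whose powers are described by S2,
   while those of L are described by S1, produces the right-hand side. *)

Lemma sum_ord_widen0 (V : nmodType) a b (F : nat -> V) : (a <= b)%N ->
  (forall k, (a <= k)%N -> (k < b)%N -> F k = 0) ->
  \sum_(k < a) F k = \sum_(k < b) F k.
Proof.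
move=> hab hF; rewrite (big_ord_widen _ _ hab) big_mkcond /=.
apply: eq_bigr => k _; case: ifP => // /negbT; rewrite -leqNgt => h.
by rewrite hF.
Qed.

Section CongruenceModPower.
Variable R : comNzRingType.
Implicit Types p q : {poly R}.

(* [eq_upto N p q]: p = q mod t^N, i.e. the first N coefficients agree.
   This is the ring congruence in which all power-series identities live. *)
Definition eq_upto (N : nat) p q := forall i, (i < N)%N -> p`_i = q`_i.

Lemma eq_upto_refl N p : eq_upto N p p. Proof. by []. Qed.

Lemma eq_upto_sym N p q : eq_upto N p q -> eq_upto N q p.
Proof. by move=> h i /h. Qed.

Lemma eq_upto_trans N p q r : eq_upto N p q -> eq_upto N q r -> eq_upto N p r.
Proof. by move=> h1 h2 i hi; rewrite h1 // h2. Qed.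

Lemma eq_upto_add N p p' q q' :
  eq_upto N p p' -> eq_upto N q q' -> eq_upto N (p + q) (p' + q').
Proof. by move=> h1 h2 i hi; rewrite !coefD h1 // h2. Qed.

Lemma eq_upto_scale N c p p' : eq_upto N p p' -> eq_upto N (c *: p) (c *: p').
Proof. by move=> h i hi; rewrite !coefZ h. Qed.

(* The i-th coefficient of a product only involves coefficients of index <= i. *)
Lemma eq_upto_mul N p p' q q' :
  eq_upto N p p' -> eq_upto N q q' -> eq_upto N (p * q) (p' * q').
Proof.
move=> h1 h2 i hi; rewrite !coefM; apply: eq_bigr => j _.
have hj : (j < N)%N by apply: leq_ltn_trans hi; rewrite -ltnS.
by rewrite h1 // h2 //; apply: leq_ltn_trans hi; exact: leq_subr.
Qed.

Lemma eq_upto_pow N p p' k : eq_upto N p p' -> eq_upto N (p ^+ k) (p' ^+ k).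
Proof.
move=> h; elim: k => [|k IH]; first exact: eq_upto_refl.
by rewrite !exprS; apply: eq_upto_mul.
Qed.

Lemma eq_upto_inv N p p' q q' : eq_upto N (p * q) 1 -> eq_upto N (p' * q') 1 ->
  eq_upto N q q' -> eq_upto N p p'.
Proof.
move=> h1 h2 hq.
have e1 : eq_upto N p (p * (q' * p')).
  rewrite -[X in eq_upto _ X _]mulr1; apply: eq_upto_mul => //.
  by apply: eq_upto_sym; rewrite mulrC.
apply: eq_upto_trans e1 _.
have e2 : eq_upto N (p * (q' * p')) ((p * q) * p').
  by rewrite mulrA; apply: eq_upto_mul => //; apply: eq_upto_mul => //; apply: eq_upto_sym.
apply: eq_upto_trans e2 _; rewrite -[X in eq_upto _ _ X]mul1r; exact: eq_upto_mul.
Qed.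

Lemma coef_pow_low q k i : q`_0 = 0 -> (i < k)%N -> (q ^+ k)`_i = 0.
Proof.
move=> q0; elim: k i => [//|k IH] i hi.
rewrite exprS coefM big1 // => j _.
case: (posnP j) => [->|jp]; first by rewrite q0 mul0r.
by rewrite IH ?mulr0 //; move: hi (ltn_ord j); rewrite ltnS; lia.
Qed.

Lemma coef_comp_low p q i : q`_0 = 0 ->
  (p \Po q)`_i = \sum_(k < i.+1) p`_k * (q ^+ k)`_i.
Proof.
move=> q0; rewrite coef_comp_poly.
rewrite (@sum_ord_widen0 _ (size p) (size p + i.+1)
  (fun k => p`_k * (q ^+ k)`_i)) ?leq_addr //; last first.
  by move=> k hk _; rewrite nth_default ?mul0r.
rewrite [RHS](@sum_ord_widen0 _ i.+1 (size p + i.+1)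
  (fun k => p`_k * (q ^+ k)`_i)) ?leq_addl //.
by move=> k hk _; rewrite coef_pow_low ?mulr0.
Qed.

Lemma eq_upto_compl N p p' q : q`_0 = 0 -> eq_upto N p p' ->
  eq_upto N (p \Po q) (p' \Po q).
Proof.
move=> q0 h i hi; rewrite !coef_comp_low //; apply: eq_bigr => k _.
by rewrite h //; apply: leq_ltn_trans hi; rewrite -ltnS.
Qed.

Lemma eq_upto_compr N p q q' : q`_0 = 0 -> q'`_0 = 0 -> eq_upto N q q' ->
  eq_upto N (p \Po q) (p \Po q').
Proof.
move=> q0 q'0 h i hi; rewrite !coef_comp_low //; apply: eq_bigr => k _.
by rewrite (eq_upto_pow k h).
Qed.

End CongruenceModPower.

Section Truncation.
Variable R : fieldType.
Implicit Types f g : fps R.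

Definition trunc (N : nat) (f : fps R) : {poly R} := \poly_(i < N) f i.

Lemma coef_trunc N f i : (i < N)%N -> (trunc N f)`_i = f i.
Proof. by move=> hi; rewrite coef_poly hi. Qed.

Lemma trunc_add N f g : trunc N (fps_add f g) = trunc N f + trunc N g.
Proof. by apply/polyP => i; rewrite coefD !coef_poly; case: ifP; rewrite ?addr0. Qed.

Lemma trunc_scale N c f : trunc N (fps_scale c f) = c *: trunc N f.
Proof. by apply/polyP => i; rewrite coefZ !coef_poly; case: ifP; rewrite ?mulr0. Qed.

Lemma trunc_one N : eq_upto N (trunc N (fps_one R)) 1.
Proof. by move=> i hi; rewrite coef_trunc // coef1 /fps_one; case: (i == 0%N). Qed.

Lemma trunc_mul N f g : eq_upto N (trunc N (fps_mul f g)) (trunc N f * trunc N g).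
Proof.
move=> i hi; rewrite coef_trunc // coefM /fps_mul; apply: eq_bigr => j _.
have hj : (j < N)%N by apply: leq_ltn_trans hi; rewrite -ltnS.
by rewrite !coef_trunc //; apply: leq_ltn_trans hi; exact: leq_subr.
Qed.

Lemma trunc_pow N f k : eq_upto N (trunc N (fps_pow f k)) ((trunc N f) ^+ k).
Proof.
elim: k => [|k IH] /=; first exact: trunc_one.
apply: eq_upto_trans; first exact: trunc_mul.
by rewrite exprS; apply: eq_upto_mul.
Qed.

Lemma coef_trunc_pow N f k i : (i < N)%N -> ((trunc N f) ^+ k)`_i = fps_pow f k i.
Proof. by move=> hi; rewrite -(trunc_pow f k hi) coef_trunc. Qed.

Lemma fps_pow_low f k i : f 0%N = 0 -> (i < k)%N -> fps_pow f k i = 0.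
Proof.
move=> f0 hik; rewrite -(coef_trunc_pow f k (ltnSn i)).
by apply: coef_pow_low => //; rewrite coef_trunc.
Qed.

(* In particular S1(l, j) = 0 for l < j, as log(1+t)^j has order j. *)
Lemma S1_low l j : (l < j)%N -> S1 l j = 0 :> R.
Proof. by move=> hlj; rewrite /S1 fps_pow_low ?mul0r ?mulr0. Qed.

Lemma size_inv_seq f n : size (fps_inv_seq f n) = n.+1.
Proof. by elim: n => [|n IH] //=; rewrite size_rcons IH. Qed.

Lemma nth_inv_seq f m i : (i <= m)%N ->
  nth 0 (fps_inv_seq f m) i = fps_inv f i.
Proof.
elim: m => [|m IH]; first by rewrite leqn0 => /eqP ->.
rewrite leq_eqVlt => /orP [/eqP -> //| hi].
by rewrite /= nth_rcons size_inv_seq hi IH.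
Qed.

Lemma fps_invS f n : fps_inv f n.+1 =
  - (f 0%N)^-1 * \sum_(i < n.+1) f i.+1 * fps_inv f (n - i)%N.
Proof.
rewrite {1}/fps_inv /= nth_rcons size_inv_seq ltnn eqxx; congr (_ * _).
by apply: eq_bigr => i _; rewrite nth_inv_seq // leq_subr.
Qed.

Lemma fps_mul_inv f n : f 0%N != 0 ->
  fps_mul f (fps_inv f) n = fps_one R n.
Proof.
move=> f0; case: n => [|n]; first by rewrite /fps_mul big_ord1 /fps_inv /= mulfV.
rewrite /fps_mul big_ord_recl subn0 fps_invS /fps_one /=.
rewrite [X in _ + X](eq_bigr (fun i : 'I_n.+1 => f i.+1 * fps_inv f (n - i)%N)).
  by rewrite mulrA mulrN mulfV // mulN1r addNr.
by move=> i _; rewrite /bump leq0n add1n subSS.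
Qed.

Lemma trunc_inv N f : f 0%N != 0 ->
  eq_upto N (trunc N (fps_inv f) * trunc N f) 1.
Proof.
move=> f0; rewrite mulrC.
apply: (@eq_upto_trans _ N _ (trunc N (fps_mul f (fps_inv f)))).
  exact/eq_upto_sym/trunc_mul.
have -> : trunc N (fps_mul f (fps_inv f)) = trunc N (fps_one R).
  by apply/polyP => i; rewrite !coef_poly fps_mul_inv.
exact: trunc_one.
Qed.

Definition fps_dilate (c : R) (f : fps R) : fps R := fun i => c^-1 * (c ^+ i * f i).

Lemma fps_pow_dilate c f k i : c != 0 ->
  fps_pow (fps_dilate c f) k i = c^-1 ^+ k * (c ^+ i * fps_pow f k i).
Proof.
move=> c0; elim: k i => [|k IH] i /=.
  by rewrite /fps_one; case: i => [|i] /=; rewrite ?expr0 ?mul1r ?mulr0.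
rewrite /fps_mul !mulr_sumr; apply: eq_bigr => j _.
have hj : (j <= i)%N by rewrite -ltnS.
have e : c ^+ i = c ^+ j * c ^+ (i - j) by rewrite -exprD subnKC.
by rewrite IH /fps_dilate e exprS; ring.
Qed.

End Truncation.

Section CharacteristicZero.
Variable R : numFieldType.
Implicit Types p q h : {poly R}.

Lemma fact_neq0 k : (k`!)%:R != 0 :> R.
Proof. by rewrite pnatr_eq0 -lt0n fact_gt0. Qed.

Lemma natS_neq0 k : 1 + k%:R != 0 :> R.
Proof. by rewrite addrC natr1 pnatr_eq0. Qed.

Lemma eq_upto_deriv N p q : eq_upto N p^`() q^`() -> p`_0 = q`_0 ->
  eq_upto N.+1 p q.
Proof.
move=> h h0 [|i] hi //; have := h i hi; rewrite !coef_deriv => e.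
have ne : (i.+1)%:R != 0 :> R by rewrite pnatr_eq0.
by apply: (mulIf ne); rewrite !mulr_natr e.
Qed.

Lemma exp_ode N (a : R) h : (forall i, (i < N)%N -> h^`()`_i = a * h`_i) ->
  h`_0 = 1 -> eq_upto N.+1 h (trunc N.+1 (fps_exp a)).
Proof.
move=> hd h0; suff hc : forall i, (i < N.+1)%N -> h`_i = a ^+ i / (i`!)%:R.
  by move=> i hi; rewrite hc // coef_trunc.
elim=> [|i IH] hi; first by rewrite h0 fact0 expr0 divr1.
have := hd i hi; rewrite coef_deriv IH ?(ltnW hi) // => e.
have ne : (i.+1)%:R != 0 :> R by rewrite pnatr_eq0.
apply: (mulIf ne); rewrite mulr_natr e factS natrM exprS.
by field; rewrite fact_neq0 natS_neq0.
Qed.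

End CharacteristicZero.

Section ExponentialSubstitution.
Variable R : numFieldType.
Variables (lam : R) (n : nat).
Hypothesis hlam : lam != 0.

Definition expm1_series : fps R := fps_sub (fps_exp 1) (fps_one R).

Definition expm1_lam : {poly R} := trunc n.+1 (fps_dilate lam expm1_series).
Definition log1p_lam : {poly R} := trunc n.+1 (fps_dilate lam (fps_log1p R)).

Lemma expm1_lam0 : expm1_lam`_0 = 0.
Proof.
rewrite coef_trunc // /fps_dilate /expm1_series /fps_sub /fps_exp /fps_one /=.
by rewrite expr0 fact0 divr1 subrr !mulr0.
Qed.

Lemma log1p_lam0 : log1p_lam`_0 = 0.
Proof. by rewrite coef_trunc // /fps_dilate /fps_log1p /= !mulr0. Qed.

Lemma deriv_expm1_lam : eq_upto n expm1_lam^`() (1 + lam *: expm1_lam).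
Proof.
move=> i hi; have hi1 : (i < n.+1)%N by exact: ltnW.
rewrite coef_deriv coefD coefZ coef1 !coef_trunc //.
rewrite /fps_dilate /expm1_series /fps_sub /fps_exp /fps_one /= !expr1n.
case: i hi hi1 => [|j] hi hi1 /=.
  by rewrite !expr0 expr1 !fact0 /= factS fact0 /=; field.
rewrite -mulr_natr !factS !natrM !exprS.
by field; rewrite fact_neq0 natS_neq0 hlam -natrD pnatr_eq0.
Qed.

(* Since u' = (1 + lam t) o u:  (G o u) u' = (G (1 + lam t)) o u. *)
Lemma deriv_comp_expm1_lam G :
  eq_upto n ((G \Po expm1_lam) * expm1_lam^`()) ((G * (1 + lam *: 'X)) \Po expm1_lam).
Proof.
have e1 : (1 : {poly R}) \Po expm1_lam = 1 by rewrite -polyC1 comp_polyC.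
rewrite comp_polyM comp_polyD comp_polyZ comp_polyX e1.
by apply: eq_upto_mul; [exact: eq_upto_refl | exact: deriv_expm1_lam].
Qed.

Lemma fps_degexpS (a : R) j : fps_degexp lam a j.+1 =
  fps_degexp lam a j * (a / lam - j%:R) * lam / (j.+1)%:R.
Proof.
rewrite /fps_degexp -!(big_mkord xpredT (fun i => a / lam - i%:R)).
rewrite big_nat_recr //= factS natrM exprS.
by field; rewrite fact_neq0 hlam natS_neq0.
Qed.

Lemma degexp_ode (a : R) : eq_upto n
  ((trunc n.+1 (fps_degexp lam a))^`() * (1 + lam *: 'X)) (a *: trunc n.+1 (fps_degexp lam a)).
Proof.
move=> i hi; have hi1 : (i < n.+1)%N by exact: ltnW.
rewrite mulrDr mulr1 -scalerAr coefD coefZ coefMX coefZ !coef_deriv.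
case: i hi hi1 => [|j] hi hi1 /=.
  rewrite !coef_trunc // /fps_degexp big_ord1 big_ord0 /= expr1 expr0.
  by rewrite mulr1n subr0 mulr0 addr0 (factS 0) !fact0 /= muln1; field.
rewrite !coef_trunc ?(ltnW hi) // (fps_degexpS a j.+1).
set D := fps_degexp lam a j.+1; rewrite -[X in X + _]mulr_natr -[D *+ _]mulr_natr.
by field; rewrite hlam -natrD pnatr_eq0.
Qed.

Lemma degexp_comp (a : R) :
  eq_upto n.+1 (trunc n.+1 (fps_degexp lam a) \Po expm1_lam) (trunc n.+1 (fps_exp a)).
Proof.
set F := trunc n.+1 (fps_degexp lam a); apply: exp_ode.
  move=> i hi; rewrite deriv_comp (deriv_comp_expm1_lam _ hi).
  by rewrite (eq_upto_compl expm1_lam0 (degexp_ode a) hi) comp_polyZ coefZ.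
rewrite coef_comp_low ?expm1_lam0 // big_ord1 expr0 coef1 mulr1 coef_trunc //.
by rewrite /fps_degexp big_ord0 fact0 expr0 divr1 mulr1.
Qed.

Lemma log1p_lam_coefS k :
  fps_dilate lam (fps_log1p R) k.+1 *+ k.+1 = lam ^+ k * (-1) ^+ k.
Proof.
rewrite /fps_dilate /fps_log1p /= -mulr_natr exprS.
by field; rewrite hlam natS_neq0.
Qed.

Lemma log1p_lam_ode : eq_upto n (log1p_lam^`() * (1 + lam *: 'X)) 1.
Proof.
move=> i hi; have hi1 : (i < n.+1)%N by exact: ltnW.
rewrite mulrDr mulr1 -scalerAr coefD coefZ coefMX !coef_deriv coef1.
case: i hi hi1 => [|j] hi hi1 /=.
  by rewrite mulr0 addr0 coef_trunc // log1p_lam_coefS !expr0 mulr1.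
by rewrite !coef_trunc ?(ltnW hi) // !log1p_lam_coefS !exprS; ring.
Qed.

Lemma log1p_lam_comp : eq_upto n.+1 (log1p_lam \Po expm1_lam) 'X.
Proof.
apply: eq_upto_deriv; last first.
  by rewrite coef_comp_low ?expm1_lam0 // big_ord1 log1p_lam0 mul0r coefX.
move=> i hi; rewrite deriv_comp (deriv_comp_expm1_lam _ hi).
rewrite (eq_upto_compl expm1_lam0 log1p_lam_ode hi).
by rewrite derivX -polyC1 comp_polyC.
Qed.

End ExponentialSubstitution.

Section GeneratingFunctions.
Variable R : numFieldType.
Variables (lam : R) (n : nat) (x y : R).
Hypothesis hlam : lam != 0.

(* 2/(e^(t/2) + e^(-t/2)) e^(x t) and its degenerate analogue: by definition
   Euler2 k x and DegEuler2 lam k x are k! times their k-th coefficients. *)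
Definition euler_gf : fps R :=
  fps_mul (fps_scale 2 (fps_inv (fps_add (fps_exp (2^-1)) (fps_exp (- 2^-1)))))
          (fps_exp x).
Definition deg_euler_gf : fps R :=
  fps_mul (fps_scale 2 (fps_inv (fps_add (fps_degexp lam (2^-1))
                                         (fps_degexp lam (- 2^-1)))))
          (fps_degexp lam x).

Definition cos_coef (m : nat) : R := (-1) ^+ m * y ^+ (2 * m) / ((2 * m)`!)%:R.
Definition cos_trunc : {poly R} := \sum_(m < n./2.+1) cos_coef m *: 'X^(2 * m).

Let u := expm1_lam lam n.
Let L := log1p_lam lam n.

(* Substituting u into the degenerate Euler generating function gives the
   ordinary one, since e_lam^a(u(t)) = e^(a t) for every a. *)
Lemma deg_euler_gf_comp :
  eq_upto n.+1 (trunc n.+1 deg_euler_gf \Po u) (trunc n.+1 euler_gf).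
Proof.
set D := fps_add (fps_degexp lam (2^-1)) (fps_degexp lam (- 2^-1)).
set E := fps_add (fps_exp (2^-1)) (fps_exp (- 2^-1) : fps R).
have D0 : D 0%N != 0.
  rewrite /D /fps_add /fps_degexp !big_ord0 fact0 !expr0 divr1 !mulr1.
  by rewrite -mulr2n pnatr_eq0.
have E0 : E 0%N != 0.
  by rewrite /E /fps_add /fps_exp !expr0 fact0 divr1 -mulr2n pnatr_eq0.
have compD : eq_upto n.+1 (trunc n.+1 D \Po u) (trunc n.+1 E).
  by rewrite /D /E !trunc_add comp_polyD; apply: eq_upto_add; exact: degexp_comp.
have prodD : eq_upto n.+1 (trunc n.+1 deg_euler_gf)
    ((2 *: trunc n.+1 (fps_inv D)) * trunc n.+1 (fps_degexp lam x)).
  by rewrite -trunc_scale; exact: trunc_mul.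
have prodE : eq_upto n.+1 (trunc n.+1 euler_gf)
    ((2 *: trunc n.+1 (fps_inv E)) * trunc n.+1 (fps_exp x)).
  by rewrite -trunc_scale; exact: trunc_mul.
apply: (eq_upto_trans (eq_upto_compl (expm1_lam0 lam n) prodD)).
apply: (eq_upto_trans _ (eq_upto_sym prodE)).
rewrite -!scalerAl comp_polyZ comp_polyM.
apply/eq_upto_scale/eq_upto_mul; last exact: degexp_comp.
apply: (eq_upto_inv (q := trunc n.+1 D \Po u) (q' := trunc n.+1 E)) => //.
- rewrite -comp_polyM.
  have := eq_upto_compl (expm1_lam0 lam n) (@trunc_inv _ n.+1 _ D0).
  by rewrite -polyC1 comp_polyC.
- exact: trunc_inv.
Qed.

Lemma cos_trunc_comp_log :
  cos_trunc \Po L = \sum_(m < n./2.+1) cos_coef m *: L ^+ (2 * m).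
Proof.
rewrite /cos_trunc raddf_sum; apply: eq_bigr => m _.
rewrite -[LHS]/((cos_coef m *: 'X^(2 * m)) \Po L).
by rewrite (@comp_polyZ R) comp_Xn_poly.
Qed.

(* Since L(u(t)) = t, substituting u into cos(y L(t)) gives back cos(y t). *)
Lemma cos_comp : eq_upto n.+1 ((cos_trunc \Po L) \Po u) cos_trunc.
Proof.
have LuX : eq_upto n.+1 (L \Po u) 'X := log1p_lam_comp hlam.
have Lu0 : (L \Po u)`_0 = 0 by rewrite LuX // coefX.
rewrite -comp_polyA; apply: eq_upto_trans (eq_upto_compr _ Lu0 _ LuX) _.
- by rewrite coefX.
- by rewrite comp_polyXr; exact: eq_upto_refl.
Qed.

Lemma generating_identity :
  eq_upto n.+1 ((trunc n.+1 deg_euler_gf * (cos_trunc \Po L)) \Po u)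
               (trunc n.+1 euler_gf * cos_trunc).
Proof.
by rewrite comp_polyM; apply: eq_upto_mul; [exact: deg_euler_gf_comp | exact: cos_comp].
Qed.


Lemma lhs_summand (g : R) m : (2 * m <= n)%N ->
  ('C(n, 2 * m))%:R * ((n - 2 * m)`!%:R * g) * (-1) ^+ m * y ^+ (2 * m)
  = n`!%:R * (cos_coef m * g).
Proof. by move=> hm; rewrite /cos_coef -(bin_fact hm) !natrM; field; rewrite !fact_neq0. Qed.

Lemma lhs_coef : \sum_(m < n./2.+1)
      ('C(n, 2 * m))%:R * Euler2 (n - 2 * m)%N x * (-1) ^+ m * y ^+ (2 * m)
  = n`!%:R * (trunc n.+1 euler_gf * cos_trunc)`_n.
Proof.
rewrite /cos_trunc mulr_sumr coef_sum mulr_sumr; apply: eq_bigr => m _.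
have hm : (2 * m <= n)%N by have := ltn_ord m; rewrite ltnS geq_half_double -mul2n.
rewrite -scalerAr coefZ coefMXn ltnNge hm /= coef_trunc; last by rewrite ltnS leq_subr.
exact: lhs_summand.
Qed.

(* One summand of the right-hand side, with S2, S1 and DegEuler2 unfolded to
   the coefficients of (e^t - 1)^k, log(1+t)^(2m) and G_lam. *)
Lemma rhs_summand (g P Q : R) k l m : (k <= n)%N -> (l <= k)%N -> (2 * m <= l)%N ->
  (n`!%:R * (P / k`!%:R)) * lam ^+ (n + l - k - 2 * m) * ('C(k, l))%:R
    * ((k - l)`!%:R * g) * (-1) ^+ m * y ^+ (2 * m) * (l`!%:R * (Q / (2 * m)`!%:R))
  = n`!%:R * ((g * (cos_coef m * (lam^-1 ^+ (2 * m) * (lam ^+ l * Q))))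
               * (lam^-1 ^+ k * (lam ^+ n * P))).
Proof.
move=> hkn hlk hml.
have hk : lam ^+ k != 0 by rewrite expf_neq0.
have hm : lam ^+ (2 * m) != 0 by rewrite expf_neq0.
have lam_exp : lam ^+ (n + l - k - 2 * m)
    = lam ^+ n * lam ^+ l / (lam ^+ k * lam ^+ (2 * m)).
  apply: (mulIf (mulf_neq0 hk hm)); rewrite mulfVK ?mulf_neq0 // -!exprD.
  by congr (_ ^+ _); lia.
have binE : ('C(k, l))%:R = k`!%:R / (l`!%:R * (k - l)`!%:R) :> R.
  apply: (mulIf (mulf_neq0 (fact_neq0 R l) (fact_neq0 R (k - l)))).
  by rewrite mulfVK ?mulf_neq0 ?fact_neq0 // -!natrM bin_fact.
rewrite lam_exp binE !exprVn /cos_coef.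
by field; rewrite !fact_neq0 hk hm.
Qed.

Lemma rhs_inner k l : (k <= n)%N -> (l <= k)%N ->
  \sum_(m < l./2.+1) S2 n k * lam ^+ (n + l - k - 2 * m)%N * ('C(k, l))%:R
      * DegEuler2 lam (k - l)%N x * (-1) ^+ m * y ^+ (2 * m) * S1 l (2 * m)
  = n`!%:R * ((trunc n.+1 deg_euler_gf)`_(k - l) * (cos_trunc \Po L)`_l * (u ^+ k)`_n).
Proof.
move=> hkn hlk.
rewrite coef_trunc; last by rewrite ltnS (leq_trans (leq_subr _ _) hkn).
rewrite cos_trunc_comp_log coef_sum mulr_sumr mulr_suml mulr_sumr.
rewrite (@sum_ord_widen0 _ l./2.+1 n./2.+1 (fun m => S2 n k * lam ^+ (n + l - k - 2 * m)%N
    * ('C(k, l))%:R * DegEuler2 lam (k - l)%N x * (-1) ^+ m * y ^+ (2 * m) * S1 l (2 * m))).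
- apply: eq_bigr => m _; rewrite coefZ.
  case: (leqP (2 * m) l) => hml; last first.
    by rewrite coef_pow_low ?log1p_lam0 // S1_low // !(mul0r, mulr0).
  rewrite /L /u !coef_trunc_pow ?ltnS ?(leq_trans hml) ?(leq_trans hlk) //.
  by rewrite !fps_pow_dilate //; exact: rhs_summand.
- by rewrite ltnS half_leq // (leq_trans hlk hkn).
- move=> m hm _; rewrite S1_low ?mulr0 //.
  by rewrite mul2n -ltn_half_double.
Qed.

Lemma rhs_coef : \sum_(k < n.+1) \sum_(l < k.+1) \sum_(m < l./2.+1)
      S2 n k * lam ^+ (n + l - k - 2 * m)%N * ('C(k, l))%:R
      * DegEuler2 lam (k - l)%N x * (-1) ^+ m * y ^+ (2 * m) * S1 l (2 * m)
  = n`!%:R * ((trunc n.+1 deg_euler_gf * (cos_trunc \Po L)) \Po u)`_n.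
Proof.
rewrite coef_comp_low ?expm1_lam0 // mulr_sumr; apply: eq_bigr => k _.
rewrite coefMr mulr_suml mulr_sumr; apply: eq_bigr => l _.
by rewrite rhs_inner // -ltnS.
Qed.

End GeneratingFunctions.

Theorem mainTheorem13 (R : realFieldType) (lam : R) (hlam : lam != 0)
  (n : nat) (x y : R) :
  \sum_(m < n./2.+1)
      ('C(n, 2 * m))%:R * Euler2 (n - 2 * m)%N x * (-1) ^+ m * y ^+ (2 * m)
  = \sum_(k < n.+1) \sum_(l < k.+1) \sum_(m < l./2.+1)
      S2 n k * lam ^+ (n + l - k - 2 * m)%N * ('C(k, l))%:R
      * DegEuler2 lam (k - l)%N x * (-1) ^+ m * y ^+ (2 * m) * S1 l (2 * m).
Proof.
rewrite lhs_coef (rhs_coef _ _ _ hlam); congr (_ * _).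
exact: esym (generating_identity x y hlam (ltnSn n)).
Qed.
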